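(* Let $G=(V,E)$ be a connected finite directed graph and $\nu$ a measure on $E$ with $\nu(e)>0$ for all $e\in E$. Let $|||\cdot|||$ be a seminorm on $\mathbb{R}^V$ with $|||\mathsf 1_V|||=0$ and let $C\in[0,\infty)$. If $|||\mathsf 1_A|||\le C\|\mathsf 1_A\|_{W^{1,1}(\nu)}$ for all simply connected sets $A\subseteq V$, then $|||f|||\le C\|f\|_{W^{1,1}(\nu)}$ for all $f:V\to\mathbb{R}$.
   Context: For $f:V\to\mathbb{R}$, $\|f\|_{W^{1,1}(\nu)}=\sum_{uv\in E}|f(v)-f(u)|\,\nu(uv)$. A set $A\subseteq V$ is simply connected if both $A$ and its complement $A^c=V\setminus A$ induce connected subgraphs (of the underlying undirected graph). $\mathsf 1_A$ is the indicator function of $A$. *)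

From mathcomp Require Import all_boot all_order all_algebra.
Set Implicit Arguments. Unset Strict Implicit. Unset Printing Implicit Defensive.
Import Order.TTheory GRing.Theory Num.Theory.
Local Open Scope ring_scope.

Definition uadj (V : finType) (e : rel V) : rel V := fun x y => e x y || e y x.

Definition induces_connected (V : finType) (e : rel V) (A : {set V}) : Prop :=
  forall x y, x \in A -> y \in A ->
    connect (fun u v => [&& u \in A, v \in A & uadj e u v]) x y.

Definition graph_connected (V : finType) (e : rel V) : Prop :=
  induces_connected e [set: V].

Definition simply_connected (V : finType) (e : rel V) (A : {set V}) : Prop :=
  induces_connected e A /\ induces_connected e (~: A).

Definition W11norm (R : realFieldType) (V : finType) (e : rel V)
  (nu : V -> V -> R) (f : V -> R) : R :=
  \sum_(p : V * V | e p.1 p.2) `|f p.2 - f p.1| * nu p.1 p.2.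

Definition indicator (R : realFieldType) (V : finType) (A : {set V}) : V -> R :=
  fun x => if x \in A then 1 else 0.

Definition seminorm (R : realFieldType) (V : finType) (N : (V -> R) -> R) : Prop :=
  (forall f g : V -> R, N (fun x => f x + g x) <= N f + N g) /\
  (forall (c : R) (f : V -> R), N (fun x => c * f x) = `|c| * N f).

(* Both sides of the inequality are compatible with the coarea decomposition
   f = m + sum_k c_k 1_{f > t_k} over the levels t_k of f: the W^{1,1} norm
   splits exactly along it (each edge uv is crossed by exactly the levels
   between f u and f v), while the seminorm is subadditive and kills
   constants. So it suffices to bound indicators. For indicators, both
   N(1_A) (using N(1_V) = 0) and W(1_A) are invariant under A |-> V \ A and
   additive when A is cut into two pieces with no edge between them. Every set
   is built from simply connected ones by these two operations: a
   disconnected set is cut along a connected component; and if A is connected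
   but V \ A is not, let D be a component of V \ A: then A u D and
   A u ((V \ A) \ D) are connected (G being connected) with smaller
   complements, and V \ A is the disjoint union of those complements. *)

From mathcomp Require Import all_boot all_order all_algebra.
From mathcomp Require Import lra.
From Stdlib Require Import Classical FunctionalExtensionality.
Set Implicit Arguments. Unset Strict Implicit. Unset Printing Implicit Defensive.
Import Order.TTheory GRing.Theory Num.Theory.
Local Open Scope ring_scope.

Lemma proper_setD (T : finType) (A B : {set T}) :
  B \subset A -> B != set0 -> A :\: B \proper A.
Proof.
move=> BA /set0Pn[x xB]; apply/properP; split; first exact: subsetDl.
by exists x; [exact: subsetP BA x xB | rewrite inE xB].
Qed.

Section Connectivity.
Variables (V : finType) (e : rel V).

Definition adj_in (B : {set V}) : rel V :=
  fun u v => [&& u \in B, v \in B & uadj e u v].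

Definition component (B : {set V}) (x : V) : {set V} :=
  [set y in B | connect (adj_in B) x y].

Definition separated (A B : {set V}) : Prop :=
  forall u v, u \in A -> v \in B -> ~~ uadj e u v.

Lemma uadj_sym : symmetric (uadj e).
Proof. by move=> u v; rewrite /uadj orbC. Qed.

Lemma adj_in_sym (B : {set V}) : symmetric (adj_in B).
Proof. by move=> u v; rewrite /adj_in uadj_sym andbCA. Qed.

Lemma separated_sym (A B : {set V}) : separated A B -> separated B A.
Proof. by move=> sepAB u v uB vA; rewrite uadj_sym sepAB. Qed.

Lemma connect_adj_in_subset (A B : {set V}) :
  A \subset B -> subrel (connect (adj_in A)) (connect (adj_in B)).
Proof.
move=> AB; apply: connect_sub => u v /and3P[uA vA uv]; apply: connect1.
by rewrite /adj_in (subsetP AB u uA) (subsetP AB v vA).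
Qed.

Lemma separated_component (B : {set V}) x :
  separated (component B x) (B :\: component B x).
Proof.
move=> u v; rewrite !inE => /andP[uB xu] /andP[/negP nxv vB].
apply/negP => uv; apply: nxv; rewrite vB (connect_trans xu) //.
by apply: connect1; rewrite /adj_in uB vB uv.
Qed.

Lemma disconnected_split (B : {set V}) : ~ induces_connected e B ->
  exists B1 : {set V}, [/\ B1 \proper B, B1 != set0 & separated B1 (B :\: B1)].
Proof.
move=> discB.
have [x [y [xB yB nxy]]] :
    exists x y, [/\ x \in B, y \in B & ~~ connect (adj_in B) x y].
  apply: NNPP => H; apply: discB => x y xB yB; apply/negPn/negP => nxy.
  by apply: H; exists x, y.
exists (component B x); split; last exact: separated_component.
- apply/properP; split; first by apply/subsetP => z; rewrite inE => /andP[].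
  by exists y => //; rewrite inE (negbTE nxy) andbF.
- by apply/set0Pn; exists x; rewrite inE xB connect0.
Qed.

Lemma connected_setU_separated (A S : {set V}) a :
  graph_connected e -> induces_connected e A -> a \in A ->
  S \subset ~: A -> separated S (~: A :\: S) -> induces_connected e (A :|: S).
Proof.
move=> conn_e connA aA SAc sepS.
have toA z : z \in A :|: S -> connect (adj_in (A :|: S)) z a.
  have [p] := connectP (conn_e z a (in_setT z) (in_setT a)).
  elim: p z => [|y p IH] z /=; first by move=> _ -> _.
  case/andP => /and3P[_ _ zy] py lastp zAS.
  case/setUP: (zAS) => [zA | zS].
    exact: connect_adj_in_subset (subsetUl A S) _ _ (connA z a zA aA).
  have yAS : y \in A :|: S.
    rewrite inE; case yA: (y \in A) => //=; apply: contraT => yS.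
    by move: (sepS z y zS); rewrite !inE yS yA zy => /(_ isT).
  apply: connect_trans (IH y py lastp yAS).
  by apply: connect1; rewrite /adj_in zAS yAS zy.
move=> x y xAS yAS; apply: connect_trans (toA x xAS) _.
by rewrite (sym_connect_sym (adj_in_sym _)); exact: toA.
Qed.

End Connectivity.

Section SimplyConnectedInduction.
Variables (V : finType) (e : rel V) (P : {set V} -> Prop).
Hypothesis conn_e : graph_connected e.
Hypothesis P_simply_connected : forall A, simply_connected e A -> P A.
Hypothesis P_setC : forall A, P A -> P (~: A).
Hypothesis P_split : forall A B : {set V},
  A \subset B -> separated e A (B :\: A) -> P A -> P (B :\: A) -> P B.

Lemma connected_ind (A : {set V}) : induces_connected e A -> P A.
Proof.
have [n] := ubnP #|~: A|; elim: n A => // n IH A ltAn connA.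
rewrite ltnS in ltAn.
have [connAc | discAc] := classic (induces_connected e (~: A)).
  exact: P_simply_connected.
have [A0 | [a aA]] := set_0Vmem A.
  by case: discAc; rewrite A0 setC0.
have [D [DAc D0 sepD]] := disconnected_split discAc.
have DsubAc := proper_sub DAc.
have compl1 : ~: (A :|: D) = ~: A :\: D by rewrite setCU setDE.
have compl2 : ~: (A :|: (~: A :\: D)) = D.
  by rewrite setCU setCD setCK setIUr setIC setICr set0U; apply/setIidPr.
have sepD2 : separated e (~: A :\: D) (~: A :\: (~: A :\: D)).
  rewrite setDDr setDv set0U (setIidPr DsubAc); exact: separated_sym.
have PD2 : P (~: A :\: D).
  rewrite -compl1; apply/P_setC/IH.
    by rewrite compl1; apply: leq_trans ltAn; apply/proper_card/proper_setD.
  exact: connected_setU_separated conn_e connA aA DsubAc sepD.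
have PD : P D.
  rewrite -compl2; apply/P_setC/IH.
    by rewrite compl2; exact: leq_trans (proper_card DAc) ltAn.
  exact: connected_setU_separated conn_e connA aA (subsetDl _ _) sepD2.
by rewrite -[A]setCK; apply/P_setC/(P_split DsubAc sepD).
Qed.

Lemma simply_connected_ind (A : {set V}) : P A.
Proof.
have [n] := ubnP #|A|; elim: n A => // n IH A ltAn; rewrite ltnS in ltAn.
have [connA | /disconnected_split [B [BA B0 sepB]]] :=
  classic (induces_connected e A); first exact: connected_ind.
apply: P_split (proper_sub BA) sepB (IH _ _) (IH _ _).
  exact: leq_trans (proper_card BA) ltAn.
exact: leq_trans (proper_card (proper_setD (proper_sub BA) B0)) ltAn.
Qed.

End SimplyConnectedInduction.

Lemma indicatorE (R : realFieldType) (V : finType) (A : {set V}) x :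
  indicator R A x = (x \in A)%:R.
Proof. by rewrite /indicator; case: (x \in A). Qed.

Section W11Norm.
Variables (R : realFieldType) (V : finType) (e : rel V) (nu : V -> V -> R).
Local Notation W := (W11norm e nu).

Lemma W11norm_ge0 f : (forall u v, e u v -> 0 < nu u v) -> 0 <= W f.
Proof.
by move=> nu_gt0; apply: sumr_ge0 => p ep; rewrite mulr_ge0 // ltW ?nu_gt0.
Qed.

Lemma W11norm_edgewise (f g h : V -> R) c :
  (forall u v, e u v -> `|f v - f u| = `|g v - g u| + c * `|h v - h u|) ->
  W f = W g + c * W h.
Proof.
move=> fgh; rewrite /W11norm mulr_sumr -big_split /=.
by apply: eq_bigr => p ep; rewrite fgh // mulrDl mulrA.
Qed.

Lemma W11norm_indicatorC (A : {set V}) :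
  W (indicator R (~: A)) = W (indicator R A).
Proof.
apply: eq_bigr => p _; rewrite !indicatorE !inE.
by case: (_ \in A); case: (_ \in A); rewrite /= ?subrr ?subr0 ?sub0r ?normrN.
Qed.

Lemma W11norm_indicator_split (A B : {set V}) :
  A \subset B -> separated e A (B :\: A) ->
  W (indicator R B) = W (indicator R A) + W (indicator R (B :\: A)).
Proof.
move=> AB sepA; rewrite -[W (indicator R (B :\: A))]mul1r.
apply: W11norm_edgewise => u v euv; rewrite mul1r !indicatorE !inE.
have uv : ~~ [&& u \in A, v \in B & v \notin A].
  apply/negP => /and3P[uA vB vA].
  by move: (sepA u v uA); rewrite inE vA vB /uadj euv => /(_ isT).
have vu : ~~ [&& v \in A, u \in B & u \notin A].
  apply/negP => /and3P[vA uB uA].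
  by move: (sepA v u vA); rewrite inE uA uB /uadj euv orbT => /(_ isT).
have uAB : (u \in A) ==> (u \in B) by apply/implyP/subsetP.
have vAB : (v \in A) ==> (v \in B) by apply/implyP/subsetP.
move: uv vu uAB vAB.
case: (u \in A); case: (v \in A); case: (u \in B); case: (v \in B) => //= *;
  by rewrite ?subrr ?subr0 ?sub0r ?normrN ?normr0 ?normr1 ?addr0 ?add0r.
Qed.

Lemma dist_level_split (a b t c : R) :
  0 <= c -> (t < a -> t + c <= a) -> (t < b -> t + c <= b) ->
  `|b - a| = `|(b - c * (t < b)%R%:R) - (a - c * (t < a)%R%:R)|
             + c * `|(t < b)%R%:R - (t < a)%R%:R|.
Proof.
move=> c_ge0 gap_a gap_b.
have [ta | a_le] := ltrP t a; have [tb | b_le] := ltrP t b.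
- by rewrite subrr normr0 mulr0 addr0; congr `|_|; lra.
- have := gap_a ta; rewrite sub0r normrN normr1 mulr1 mulr0 subr0.
  by move=> ac; rewrite !ler0_norm; lra.
- have := gap_b tb; rewrite subr0 normr1 mulr1 mulr0 subr0.
  by move=> bc; rewrite !ger0_norm; lra.
- by rewrite subrr normr0 mulr0 addr0; congr `|_|; lra.
Qed.

Lemma W11norm_level_split f t c :
  0 <= c -> (forall x, t < f x -> t + c <= f x) ->
  W f = W (fun x => f x - c * indicator R [set x | t < f x] x)
        + c * W (indicator R [set x | t < f x]).
Proof.
move=> c_ge0 gap; apply: W11norm_edgewise => u v _; rewrite !indicatorE !inE.
exact: dist_level_split c_ge0 (gap u) (gap v).
Qed.

End W11Norm.

Section Seminorm.
Variables (R : realFieldType) (V : finType) (N : (V -> R) -> R).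
Hypotheses (N_seminorm : seminorm N) (N1 : N (indicator R [set: V]) = 0).

Lemma seminorm_const m : N (fun _ => m) = 0.
Proof.
have -> : (fun _ => m) = (fun x => m * indicator R [set: V] x).
  by apply: functional_extensionality => x; rewrite indicatorE in_setT mulr1.
by rewrite N_seminorm.2 N1 mulr0.
Qed.

Lemma seminorm_indicatorC (A : {set V}) :
  N (indicator R (~: A)) <= N (indicator R A).
Proof.
have -> : indicator R (~: A) =
    (fun x => indicator R [set: V] x + (-1) * indicator R A x).
  apply: functional_extensionality => x; rewrite !indicatorE !inE.
  by case: (x \in A); rewrite /= ?mulr1 ?subrr ?mulr0 ?addr0.
apply: le_trans (N_seminorm.1 _ _) _.
by rewrite N_seminorm.2 N1 normrN normr1 mul1r add0r.
Qed.

Lemma seminorm_indicator_split (A B : {set V}) : A \subset B ->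
  N (indicator R B) <= N (indicator R A) + N (indicator R (B :\: A)).
Proof.
move=> AB; have -> : indicator R B =
    (fun x => indicator R A x + indicator R (B :\: A) x).
  apply: functional_extensionality => x; rewrite !indicatorE !inE.
  have : (x \in A) ==> (x \in B) by apply/implyP/subsetP.
  by case: (x \in A); case: (x \in B) => //= _; rewrite ?addr0 ?add0r.
exact: N_seminorm.1.
Qed.

End Seminorm.

Section Coarea.
Variables (R : realFieldType) (V : finType) (e : rel V) (nu : V -> V -> R).
Variables (N : (V -> R) -> R) (C : R).
Hypotheses (nu_gt0 : forall u v, e u v -> 0 < nu u v) (N_seminorm : seminorm N).
Hypotheses (N1 : N (indicator R [set: V]) = 0) (C_ge0 : 0 <= C).
Hypothesis N_indicator :
  forall A : {set V}, N (indicator R A) <= C * W11norm e nu (indicator R A).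

Lemma seminorm_le_W11norm_level_step (f : V -> R) (m c : R) :
  0 <= c -> (forall x, m < f x -> m + c <= f x) ->
  N (fun x => f x - c * indicator R [set x | m < f x] x)
    <= C * W11norm e nu (fun x => f x - c * indicator R [set x | m < f x] x) ->
  N f <= C * W11norm e nu f.
Proof.
move=> c_ge0 gap Ng; rewrite (W11norm_level_split _ _ c_ge0 gap) mulrDr.
set A := [set x | m < f x] in Ng *; set g := (fun x => _) in Ng *.
have -> : f = (fun x => g x + c * indicator R A x).
  by apply: functional_extensionality => x; rewrite /g subrK.
apply: le_trans (N_seminorm.1 _ _) _; rewrite N_seminorm.2 ger0_norm //.
by apply: lerD Ng _; rewrite mulrCA ler_wpM2l ?N_indicator.
Qed.

Lemma seminorm_le_W11norm_bounded_below m f :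
  (forall x, m <= f x) -> N f <= C * W11norm e nu f.
Proof.
have [n] := ubnP #|[set x | m < f x]|; elim: n f => // n IH f.
rewrite ltnS => An f_ge_m.
have [A0 | [x0]] := set_0Vmem [set x | m < f x]; last rewrite inE => x0_gt.
  have -> : f = (fun _ => m).
    apply: functional_extensionality => x; apply/le_anti; rewrite f_ge_m andbT.
    by have := in_set0 x; rewrite -A0 inE leNgt => ->.
  by rewrite seminorm_const // mulr_ge0 // W11norm_ge0.
have [x1 x1_gt x1_min] := @arg_minP _ _ _ x0 (fun x => m < f x) f x0_gt.
pose c := f x1 - m.
have c_ge0 : 0 <= c by rewrite subr_ge0 ltW.
have gap x : m < f x -> m + c <= f x by rewrite addrC subrK; apply: x1_min.
apply: (seminorm_le_W11norm_level_step c_ge0 gap); apply: IH => [|x].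
  apply: leq_trans An; apply: proper_card; apply/properP; split.
    apply/subsetP => x; rewrite !inE indicatorE inE.
    by have [// | fx_le] := ltrP m (f x); rewrite mulr0 subr0 ltNge fx_le.
  exists x1; first by rewrite inE.
  by rewrite !inE indicatorE inE x1_gt mulr1 /c opprB addrCA subrr addr0 ltxx.
rewrite indicatorE inE; have [mfx | _] := ltrP m (f x).
  by rewrite mulr1 lerBrDr gap.
by rewrite mulr0 subr0.
Qed.

Lemma seminorm_le_W11norm f : N f <= C * W11norm e nu f.
Proof.
apply: (@seminorm_le_W11norm_bounded_below (- \sum_x `|f x|)) => x.
rewrite lerNl (le_trans (ler_norm _)) // normrN (bigD1 x) //= lerDl.
exact: sumr_ge0.
Qed.

End Coarea.

Theorem theorem2p3 (R : realFieldType) (V : finType) (e : rel V)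
  (nu : V -> V -> R) (N : (V -> R) -> R) (C : R) :
  graph_connected e ->
  (forall u v, e u v -> 0 < nu u v) ->
  seminorm N ->
  N (indicator R [set: V]) = 0 ->
  0 <= C ->
  (forall A : {set V}, simply_connected e A ->
     N (indicator R A) <= C * W11norm e nu (indicator R A)) ->
  forall f : V -> R, N f <= C * W11norm e nu f.
Proof.
move=> conn_e nu_gt0 N_seminorm N1 C_ge0 N_simply_connected.
apply: seminorm_le_W11norm => // A.
apply: (@simply_connected_ind _ e
  (fun A => N (indicator R A) <= C * W11norm e nu (indicator R A)) conn_e
  N_simply_connected).
- move=> B /= NB; rewrite W11norm_indicatorC.
  exact: le_trans (seminorm_indicatorC N_seminorm N1 B) NB.
- move=> B D BD sepB /= NB ND.
  rewrite (W11norm_indicator_split nu BD sepB) mulrDr.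
  exact: le_trans (seminorm_indicator_split N_seminorm BD) (lerD NB ND).
Qed.
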